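(* Let $G=K_n$ be the complete graph of order $n\geq 3$, let $g:V(G_1)\to V(G_2)$ be a function with image $I=\{v_1,\dots,v_s\}$ ($s=|I|$), let $n_i=|\{u\in V(G_1): g(u)=v_i\}|$ for $1\le i\le s$, and let $m=|\{i: 1\le i\le s,\ n_i=1\}|$. If $2\leq m\leq s$, then $Dist(F_G)\geq \psi(m)$.
   Context: $Dist(H)$ is the least $t$ such that $H$ has a labeling $V(H)\to\{1,\dots,t\}$ preserved by no non-identity automorphism of $H$. Functigraph: for disjoint copies $G_1,G_2$ of $G$ and a function $g:V(G_1)\to V(G_2)$, $F_G$ has vertex set $V(G_1)\cup V(G_2)$ and edge set $E(G_1)\cup E(G_2)\cup\{uv: u\in V(G_1),\ g(u)=v\}$. The function $\psi:\mathbb{N}\setminus\{1\}\to\mathbb{N}\setminus\{1\}$ is defined by $\psi(m)=k$, where $k$ is the least number (with $k\ge2$) such that $m\leq 2\binom{k}{2}+k$. *)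

From mathcomp Require Import all_boot all_fingroup.
Set Implicit Arguments. Unset Strict Implicit. Unset Printing Implicit Defensive.

Definition is_aut (V : finType) (adj : rel V) (s : {perm V}) : bool :=
  [forall x, forall y, adj (s x) (s y) == adj x y].

(* There is a labeling with labels in {1,..,t} (encoded as 'I_t) preserved
   by no non-identity automorphism. *)
Definition distinguishing (V : finType) (adj : rel V) (t : nat) : bool :=
  [exists f : {ffun V -> 'I_t},
     [forall s : {perm V},
        (is_aut adj s && [forall x, f (s x) == f x]) ==> (s == 1%g)]].

Lemma distinguishing_exists (V : finType) (adj : rel V) :
  exists t, distinguishing adj t.
Proof.
exists #|V|; apply/existsP; exists [ffun x => enum_rank x].
apply/forallP=> s; apply/implyP=> /andP[_ /forallP H].
apply/eqP/permP=> x; rewrite perm1.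
by have := H x; rewrite !ffunE => /eqP /enum_rank_inj.
Qed.

Definition Dist (V : finType) (adj : rel V) : nat :=
  ex_minn (distinguishing_exists adj).

Definition Kn_adj (n : nat) : rel 'I_n := fun x y => x != y.

(* Functigraph F_G for a graph adj on V and g : V(G1) -> V(G2);
   G1 = inl copy, G2 = inr copy. *)
Definition functigraph (V : finType) (adj : rel V) (g : V -> V) : rel (V + V) :=
  fun a b =>
    match a, b with
    | inl x, inl y => adj x y
    | inr x, inr y => adj x y
    | inl u, inr v => g u == v
    | inr v, inl u => g u == v
    end.

Lemma psi_exists (m : nat) : exists k, (2 <= k) && (m <= 2 * 'C(k, 2) + k).
Proof. exists m.+2; apply/andP; split=> //; apply: leq_trans (leq_addl _ _); exact: leq_trans (leqnSn _) (leqnSn _). Qed.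

Definition psi (m : nat) : nat := ex_minn (psi_exists m).

From mathcomp Require Import all_boot all_fingroup.
From mathcomp Require Import zify.

Set Implicit Arguments. Unset Strict Implicit. Unset Printing Implicit Defensive.

(* If v and w each have a unique g-preimage, u and u' say, then swapping u, u'
   in the first copy and v, w in the second is an automorphism of F_G (every
   permutation of K_n is an automorphism of K_n).  A distinguishing t-labeling
   f must break it, so (f u, f v) <> (f u', f w): the map u |-> (f u, f (g u))
   is injective on the preimages of the m vertices with a unique preimage,
   whence m <= t^2.  As t^2 = 2 C(t,2) + t and t >= 2, the minimality of psi m
   gives psi m <= t. *)

Lemma sqn_bin2 (k : nat) : k * k = 2 * 'C(k, 2) + k.
Proof. by elim: k => [//|k IHk]; rewrite binS bin1; lia. Qed.

Lemma psi_le (m k : nat) : 2 <= m -> m <= k * k -> psi m <= k.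
Proof.
move=> m_ge2 m_le_kk; rewrite /psi; case: ex_minnP => k0 _; apply.
by rewrite -sqn_bin2 m_le_kk andbT; nia.
Qed.

Lemma distinguishing_Dist (V : finType) (adj : rel V) :
  distinguishing adj (Dist adj).
Proof. by rewrite /Dist; case: ex_minnP. Qed.

Lemma is_aut_Kn (n : nat) (s : {perm 'I_n}) : is_aut (@Kn_adj n) s.
Proof.
by apply/forallP=> x; apply/forallP=> y; rewrite /Kn_adj (inj_eq perm_inj).
Qed.

Section SumPerm.
Variables (V : finType) (s1 s2 : {perm V}).

Definition sum_fun (x : V + V) : V + V :=
  match x with inl y => inl (s1 y) | inr y => inr (s2 y) end.

Lemma sum_fun_inj : injective sum_fun.
Proof. by case=> x [] y //= [] /perm_inj ->. Qed.

Definition sum_perm : {perm V + V} := perm sum_fun_inj.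

Lemma sum_permE x : sum_perm x = sum_fun x.
Proof. exact: permE. Qed.

Lemma functigraph_sum_perm_aut (adj : rel V) (g : V -> V) :
  is_aut adj s1 -> is_aut adj s2 -> (forall x, g (s1 x) = s2 (g x)) ->
  is_aut (functigraph adj g) sum_perm.
Proof.
move=> /forallP aut1 /forallP aut2 g_comm.
apply/forallP=> x; apply/forallP=> y; rewrite !sum_permE.
case: x => x; case: y => y /=; rewrite ?g_comm ?(inj_eq perm_inj) //.
- exact: (forallP (aut1 x)).
- exact: (forallP (aut2 x)).
Qed.

End SumPerm.

Section UniquePreimages.
Variables (V : finType) (g : V -> V).

Definition unique_preimages : {set V} := [set v | #|[set u | g u == v]| == 1].

Lemma unique_preimage_inj (u x : V) :
  g u \in unique_preimages -> g x = g u -> x = u.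
Proof.
rewrite inE => /cards1P[z preim_z] gxu.
have preim x' : g x' = g u -> x' = z.
  by move=> gx'; apply/set1P; rewrite -preim_z inE gx'.
by rewrite (preim x gxu) (preim u erefl).
Qed.

Lemma tperm_unique_preimages (u u' x : V) :
  g u \in unique_preimages -> g u' \in unique_preimages ->
  g (tperm u u' x) = tperm (g u) (g u') (g x).
Proof.
move=> Mu Mu'; case: tpermP => [->|->|xu xu']; rewrite ?tpermL ?tpermR //.
by rewrite tpermD //; apply/eqP=> gx; [apply: xu | apply: xu'];
  apply: unique_preimage_inj.
Qed.

Lemma card_unique_preimages_le_preim :
  #|unique_preimages| <= #|[set u | g u \in unique_preimages]|.
Proof.
apply: leq_trans (leq_imset_card g _); apply/subset_leq_card/subsetP => v Mv.
have := Mv; rewrite inE => /cards1P[u preim_u].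
have : u \in [set u | g u == v] by rewrite preim_u set11.
by rewrite inE => /eqP gu; apply/imsetP; exists u; rewrite // inE gu.
Qed.

Variable adj : rel V.
Hypothesis all_aut : forall s : {perm V}, is_aut adj s.

Lemma card_unique_preimages_le (t : nat) :
  distinguishing (functigraph adj g) t -> #|unique_preimages| <= t * t.
Proof.
move=> /existsP[f /forallP f_dist].
pose h u := (f (inl u), f (inr (g u))).
have h_inj : {in [set u | g u \in unique_preimages] &, injective h}.
  move=> u u'; rewrite !(in_set (fun x => g x \in unique_preimages)).
  move=> Mu Mu' [fu fgu]; apply/eqP/negPn/negP => uu'.
  pose s := sum_perm (tperm u u') (tperm (g u) (g u')).
  have s_aut : is_aut (functigraph adj g) s.
    apply: functigraph_sum_perm_aut; rewrite ?all_aut // => x.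
    exact: tperm_unique_preimages.
  have s_fix : [forall x, f (s x) == f x].
    apply/forallP=> -[] x; rewrite sum_permE /=;
      by case: tpermP => [->|->|]; rewrite ?fu ?fgu.
  have := f_dist s; rewrite s_aut s_fix => /eqP/permP/(_ (inl u)).
  by rewrite perm1 sum_permE /= tpermL => -[u'u]; rewrite u'u eqxx in uu'.
apply: leq_trans card_unique_preimages_le_preim _.
by rewrite -(card_in_imset h_inj) (leq_trans (max_card _)) // card_prod card_ord.
Qed.

End UniquePreimages.

Theorem proposition3p2 (n : nat) (g : 'I_n -> 'I_n) :
  3 <= n ->
  let s := #|[set g u | u in 'I_n]| in
  let m := #|[set v : 'I_n | #|[set u | g u == v]| == 1]| in
  2 <= m <= s ->
  psi m <= Dist (functigraph (@Kn_adj n) g).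
Proof.
move=> _ s m /andP[m_ge2 _]; apply: psi_le m_ge2 _.
exact: (card_unique_preimages_le (@is_aut_Kn n)
  (distinguishing_Dist (functigraph (@Kn_adj n) g))).
Qed.
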